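(* For every $\alpha\in(0,1]$ and every $P\in\mathcal{P}$, the set $P^\alpha$ is compact in $\mathcal{P}$ for the weak topology.
   Context: $\mathcal{P}$ denotes the set of all probability measures on $(\mathbb{R}^d,\mathcal{B}_d)$, $\mathcal{B}_d$ the Borel $\sigma$-algebra, endowed with the topology of weak convergence. For $P\in\mathcal{P}$ and $\alpha\in(0,1]$, the $\alpha$-trimming of $P$ is $P^\alpha=\{Q\in\mathcal{P} : Q(B)\le \alpha^{-1}P(B)\text{ for all } B\in\mathcal{B}_d\}$. *)

From HB Require Import structures.
From mathcomp Require Import all_boot all_order all_algebra.
From mathcomp Require Import all_classical all_reals all_analysis.

Set Implicit Arguments.
Unset Strict Implicit.
Unset Printing Implicit Defensive.
Import Order.TTheory GRing.Theory Num.Theory.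
Import numFieldNormedType.Exports.
Local Open Scope classical_set_scope.
Local Open Scope ring_scope.

Definition Rd (R : realType) (d : nat) :=
  g_sigma_algebraType (@open 'M[R]_(1, d)).

Definition prob (R : realType) (d : nat) := probability (Rd R d) R.

HB.instance Definition _ (R : realType) (d : nat) :=
  gen_eqMixin (prob R d).
HB.instance Definition _ (R : realType) (d : nat) :=
  gen_choiceMixin (prob R d).

Definition bcf (R : realType) (d : nat) :=
  {f : 'M[R]_(1, d) -> R | continuous f /\ exists M : R, forall x, `|f x| <= M}.

Definition weak_eval (R : realType) (d : nat) (Q : prob R d)
  : {ptws bcf R d -> R} :=
  fun f => fine (\int[Q]_(x in [set: Rd R d]) ((proj1_sig f) x)%:E).

(* P with the topology of weak convergence: the coarsest topology making
   every Q |-> \int f dQ (f bounded continuous) continuous. *)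
Definition weak_prob (R : realType) (d : nat) :=
  initial_topology (@weak_eval R d).

Definition trimming (R : realType) (d : nat) (alpha : R) (P : prob R d)
  : set (prob R d) :=
  [set Q : prob R d | forall B : set (Rd R d), measurable B ->
     (Q B <= (alpha^-1)%:E * P B)%E].

(* Compactness is tested with ultrafilters.  Along an ultrafilter U containing
   P^alpha, each Q(B) lies in [0, 1] and so converges; the limit Q_U(B) is
   finitely additive and still bounded by alpha^-1 P(B).  That bound transfers
   the continuity from below of P to Q_U, so Q_U is a probability in P^alpha.
   Finally, Q(B) -> Q_U(B) for every Borel B, and approximating a bounded
   continuous f uniformly by step functions on the sets f^-1 [kh, (k+1)h)
   upgrades this to \int f dQ -> \int f dQ_U, i.e. U converges weakly to Q_U. *)

From HB Require Import structures.
From mathcomp Require Import all_boot all_order all_algebra.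
From mathcomp Require Import all_classical all_reals all_analysis.
From mathcomp Require Import measurable_realfun lra.
Import Order.TTheory GRing.Theory Num.Theory.
Import numFieldNormedType.Exports.
Local Open Scope classical_set_scope.
Local Open Scope ring_scope.

Lemma initial_topology_cvg {S : choiceType} {T : topologicalType} (f : S -> T)
    (F : set_system S) (s : S) :
  Filter F -> f @ F --> f s -> F --> (s : initial_topology f).
Proof.
move=> FF fFs A; rewrite nbhsE => -[_ [[B oB <-] Bfs] BA].
by apply: filterS BA _; apply: fFs; exact: open_nbhs_nbhs.
Qed.

Lemma ptws_cvg {U : Type} {V : topologicalType} (F : set_system {ptws U -> V})
    (g : {ptws U -> V}) :
  Filter F -> (forall t, (fun h => h t) @ F --> g t) -> F --> g.
Proof.
move=> FF Fg; suff : F --> (g : product_topology_def (fun _ : U => V)) by [].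
apply/cvg_sup => t; exact: initial_topology_cvg.
Qed.

Lemma ultra_fmap {T U : Type} (f : T -> U) {F : set_system T} :
  UltraFilter F -> UltraFilter (f @ F).
Proof.
move=> FU; split; first exact: fmap_proper_filter.
move=> G GP FG; rewrite predeqE => A; split; last exact: FG.
move=> GA; have [//|FnA] := in_ultra_setVsetC (f @^-1` A) FU.
have GnA : G (~` A) by apply: FG; rewrite /= nbhs_simpl.
by exfalso; apply: (filter_not_empty G); rewrite -(setICr A); exact: filterI.
Qed.

Lemma ultra_cvg_itv {R : realType} {I : Type} {U : set_system I} {g : I -> R}
    {a b : R} :
  UltraFilter U -> (forall i, a <= g i <= b) ->
  exists2 l, a <= l <= b & g @ U --> l.
Proof.
move=> UU gab; have := @segment_compact R a b; rewrite compact_ultra.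
case/(_ (g @ U) (ultra_fmap g UU)) => [|l [abl gl]].
  by apply: nearW => i /=; rewrite in_itv; exact: gab.
by exists l; rewrite // -[_ <= _ <= _]in_itv.
Qed.

Lemma fine_probability_itv {R : realType} {dT} {T : measurableType dT}
    (Q : probability T R) (B : set T) :
  measurable B -> 0 <= fine (Q B) <= 1.
Proof.
move=> mB; rewrite fine_ge0 ?measure_ge0 //= -lee_fin fineK ?fin_num_measure //.
exact: probability_le1.
Qed.

Lemma fine_measureD {R : realType} {dT} {T : measurableType dT}
    (P : {finite_measure set T -> \bar R}) (A B : set T) :
  measurable A -> measurable B -> A `<=` B ->
  fine (P (B `\` A)) = fine (P B) - fine (P A).
Proof.
move=> mA mB AB.
have PBoo : (P B < +oo)%E by rewrite -ge0_fin_numE ?fin_num_measure.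
by rewrite measureD // setIidr // fineB ?fin_num_measure.
Qed.

Section ultralimit.
Context {R : realType} {dT} {T : measurableType dT} {I : Type}.
Variables (U : set_system I) (mu : I -> probability T R).
Hypothesis UU : UltraFilter U.

Definition ulim_mass (B : set T) : R := lim (fine (mu i B) @[i --> U]).

Lemma ulim_mass_cvg B :
  measurable B -> fine (mu i B) @[i --> U] --> ulim_mass B.
Proof.
move=> mB.
have [l _ Ul] := ultra_cvg_itv UU (fun i => fine_probability_itv (mu i) _ mB).
by rewrite /ulim_mass (cvg_lim _ Ul).
Qed.

Lemma ulim_mass_ge0 B : measurable B -> 0 <= ulim_mass B.
Proof.
move=> mB; apply: (cvgr_to_ge (ulim_mass_cvg _ mB)).
by apply: nearW => i; have /andP[] := fine_probability_itv (mu i) _ mB.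
Qed.

Lemma ulim_mass_cst B r : (forall i, fine (mu i B) = r) -> ulim_mass B = r.
Proof.
move=> Br; apply: cvg_lim => //; apply: cvg_near_cst; exact: nearW.
Qed.

Lemma ulim_mass0 : ulim_mass set0 = 0.
Proof. by apply: ulim_mass_cst => i; rewrite measure0. Qed.

Lemma ulim_massT : ulim_mass setT = 1.
Proof. by apply: ulim_mass_cst => i; rewrite probability_setT. Qed.

Lemma ulim_massU A B : measurable A -> measurable B -> A `&` B = set0 ->
  ulim_mass (A `|` B) = ulim_mass A + ulim_mass B.
Proof.
move=> mA mB AB; apply: cvg_lim => //.
have -> : (fun i => fine (mu i (A `|` B))) =
    (fun i => fine (mu i A) + fine (mu i B)).
  by apply/funext => i; rewrite measureU // fineD // fin_num_measure.
by apply: cvgD; exact: ulim_mass_cvg.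
Qed.

Lemma ulim_massD A B : measurable A -> measurable B -> A `<=` B ->
  ulim_mass (B `\` A) = ulim_mass B - ulim_mass A.
Proof.
move=> mA mB AB.
rewrite -[in ulim_mass B](setDUK AB) ulim_massU ?setDIK //.
  by rewrite addrC addKr.
exact: measurableD.
Qed.

Lemma ulim_mass_bigsetU (F : nat -> set T) n :
  (forall k, measurable (F k)) -> trivIset setT F ->
  ulim_mass (\big[setU/set0]_(k < n) F k) = \sum_(k < n) ulim_mass (F k).
Proof.
move=> mF tF; elim: n => [|n IH]; first by rewrite !big_ord0 ulim_mass0.
rewrite !big_ord_recr /= ulim_massU ?IH //; first exact: bigsetU_measurable.
rewrite -bigcup_mkord setI_bigcupl; apply: bigcup0 => k /= kn.
apply/seteqP; split => // x [Fkx Fnx].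
by move: kn; rewrite (tF k n Logic.I Logic.I) ?ltnn //; exists x.
Qed.

Variables (c : R) (P : {finite_measure set T -> \bar R}).
Hypothesis mu_dominated :
  U [set i | forall B, measurable B -> (mu i B <= c%:E * P B)%E].

Lemma ulim_mass_le B : measurable B -> ulim_mass B <= c * fine (P B).
Proof.
move=> mB; apply: (cvgr_to_le (ulim_mass_cvg _ mB)).
apply: filterS mu_dominated => i /(_ B mB).
by rewrite -lee_fin EFinM !fineK ?fin_num_measure.
Qed.

Lemma ulim_mass_nondecreasing_cvg (G : nat -> set T) :
  (forall n, measurable (G n)) -> measurable (\bigcup_n G n) ->
  nondecreasing_seq G ->
  ulim_mass (G n) @[n --> \oo] --> ulim_mass (\bigcup_n G n).
Proof.
move=> mG mGoo ndG.
have PG : c * fine (P (G n)) @[n --> \oo] --> c * fine (P (\bigcup_n G n)).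
  apply: cvgM; first exact: cvg_cst.
  apply: fine_cvg; rewrite fineK ?fin_num_measure //.
  exact: nondecreasing_cvg_mu.
apply/cvgrPdist_le => e e0; move/cvgrPdist_le: PG => /(_ e e0).
apply: filterS => n PGn.
have Gn : G n `<=` \bigcup_n G n by exact: bigcup_sup.
have mD := measurableD mGoo (mG n).
rewrite -ulim_massD // ger0_norm ?ulim_mass_ge0 //.
apply: le_trans (ulim_mass_le _ mD) _; apply: le_trans (ler_norm _) _.
by rewrite fine_measureD // mulrBr.
Qed.

(* The norm only matters off the measurable sets, where [ulim_mass] is junk. *)
Definition ulim_measure (B : set T) : \bar R := (`|ulim_mass B|)%:E.

Lemma ulim_measureE B : measurable B -> ulim_measure B = (ulim_mass B)%:E.
Proof. by move=> mB; rewrite /ulim_measure ger0_norm ?ulim_mass_ge0. Qed.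

Let ulim_measure0 : ulim_measure set0 = 0%E.
Proof. by rewrite ulim_measureE // ulim_mass0. Qed.

Let ulim_measure_ge0 B : (0 <= ulim_measure B)%E.
Proof. by rewrite lee_fin. Qed.

Let ulim_measure_sigma_additive : semi_sigma_additive ulim_measure.
Proof.
move=> F mF tF mUF; rewrite ulim_measureE //.
under eq_fun => n.
  rewrite big_mkord; under eq_bigr do rewrite ulim_measureE //.
  by rewrite sumEFin -ulim_mass_bigsetU //; over.
apply: cvg_EFin; first exact: nearW.
rewrite -cvg_shiftS /= -bigcup_bigsetU_bigcup.
apply: ulim_mass_nondecreasing_cvg; rewrite ?bigcup_bigsetU_bigcup //.
- by move=> n; exact: bigsetU_measurable.
- by move=> m n mn; apply/subsetPset/subset_bigsetU.
Qed.

HB.instance Definition _ := isMeasure.Build _ T R ulim_measure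
  ulim_measure0 ulim_measure_ge0 ulim_measure_sigma_additive.

Let ulim_measureT : ulim_measure setT = 1%E.
Proof. by rewrite ulim_measureE // ulim_massT. Qed.

HB.instance Definition _ :=
  Measure_isProbability.Build _ T R ulim_measure ulim_measureT.

Definition ulim_probability : probability T R := ulim_measure.

Lemma ulim_probability_dominated B :
  measurable B -> (ulim_probability B <= c%:E * P B)%E.
Proof.
move=> mB; rewrite [ulim_probability B]ulim_measureE //.
by rewrite -(fineK (fin_num_measure P B mB)) -EFinM lee_fin ulim_mass_le.
Qed.

Lemma ulim_probability_cvg B : measurable B ->
  fine (mu i B) @[i --> U] --> fine (ulim_probability B).
Proof.
move=> mB; rewrite [ulim_probability B]ulim_measureE //; exact: ulim_mass_cvg.
Qed.

End ultralimit.

Section bounded_integrals.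
Context {R : realType} {dT} {T : measurableType dT}.

Lemma bounded_integrable (mu : {finite_measure set T -> \bar R}) (f : T -> R)
    (M : R) :
  measurable_fun setT f -> (forall x, `|f x| <= M) ->
  mu.-integrable setT (EFin \o f).
Proof.
move=> mf fM; apply: measurable_bounded_integrable => //.
  by rewrite -ge0_fin_numE ?fin_num_measure.
exists M; split; first exact: num_real.
by move=> y My x _; apply: le_trans (fM x) (ltW My).
Qed.

Lemma integrable_indicZ (mu : {finite_measure set T -> \bar R}) (r : R)
    (B : set T) :
  measurable B -> mu.-integrable setT (EFin \o (fun x => r * \1_B x)).
Proof.
move=> mB; have := integrableZl measurableT r (integrable_indic mu mB).
by apply: eq_integrable => // x _.
Qed.

Lemma integrable_indic_comb (mu : {finite_measure set T -> \bar R})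
    (c : nat -> R) (B : nat -> set T) (N : nat) :
  (forall k, measurable (B k)) ->
  mu.-integrable setT (EFin \o (fun x => \sum_(k < N) c k * \1_(B k) x)).
Proof.
move=> mB; elim: N => [|N IH].
  by under eq_fun do rewrite big_ord0; exact: integrable0.
under eq_fun do rewrite big_ord_recr /=.
exact: (integrableD measurableT IH (integrable_indicZ _ _ _ (mB N))).
Qed.

Lemma Rintegral_indic_comb (mu : {finite_measure set T -> \bar R})
    (c : nat -> R) (B : nat -> set T) (N : nat) :
  (forall k, measurable (B k)) ->
  \int[mu]_x (\sum_(k < N) c k * \1_(B k) x) =
  \sum_(k < N) c k * fine (mu (B k)).
Proof.
move=> mB; elim: N => [|N IH].
  under eq_Rintegral do rewrite big_ord0.
  by rewrite Rintegral_cst // mul0r big_ord0.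
under eq_Rintegral do rewrite big_ord_recr /=.
rewrite RintegralD ?integrable_indic_comb ?integrable_indicZ // IH big_ord_recr.
rewrite RintegralZl //; last exact: integrable_indic.
by rewrite /Rintegral integral_indic // setIT.
Qed.

Lemma Rintegral_dist_le (mu : probability T R) (f g : T -> R) (h : R) :
  mu.-integrable setT (EFin \o f) -> mu.-integrable setT (EFin \o g) ->
  (forall x, `|f x - g x| <= h) ->
  `|\int[mu]_x f x - \int[mu]_x g x| <= h.
Proof.
move=> intf intg fgh; rewrite -RintegralB //.
have intfg := integrableB measurableT intf intg.
apply: le_trans (le_normr_Rintegral _ intfg) _ => //.
have -> : h = \int[mu]_(x in setT) h.
  by rewrite Rintegral_cst // [fine _](congr1 fine (probability_setT mu)) mulr1.
apply: le_Rintegral => //; first exact: integrable_norm.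
by apply: (bounded_integrable _ _ `|h|) => //; exact: measurable_cst.
Qed.

Lemma truncn_divE (y h : R) (j : nat) : 0 <= y -> 0 < h ->
  (Num.truncn (y / h) == j) = (j%:R * h <= y < j.+1%:R * h).
Proof.
move=> y0 h0; have yh0 : 0 <= y / h by rewrite divr_ge0 // ltW.
by rewrite truncn_eq // ler_pdivlMr // ltr_pdivrMr.
Qed.

Lemma uniform_simple_approx (f : T -> R) (M h : R) :
  measurable_fun setT f -> (forall x, `|f x| <= M) -> 0 < h ->
  exists N (c : nat -> R) (B : nat -> set T), (forall k, measurable (B k)) /\
    forall x, `|f x - \sum_(k < N) c k * \1_(B k) x| <= h.
Proof.
move=> mf fM h0.
pose c k : R := k%:R * h - M; pose B k := f @^-1` `[c k, c k.+1[.
exists (Num.truncn (2 * M / h)).+1, c, B; split.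
  by move=> k; rewrite -[B k]setTI; exact: mf.
move=> x; have /andP[Mfx fxM] : - M <= f x <= M by rewrite -ler_norml.
have fxM0 : 0 <= f x + M by rewrite -lerBlDr sub0r.
have inB j : (x \in B j) = (Num.truncn ((f x + M) / h) == j).
  rewrite truncn_divE //; apply/idP/idP;
  by rewrite in_setE /B /c /= in_itv /= lerBlDr ltrBrDr.
set k := Num.truncn ((f x + M) / h).
have kN : (k < (Num.truncn (2 * M / h)).+1)%N.
  by rewrite ltnS le_truncn // ler_pM2r ?invr_gt0 //; lra.
rewrite (eq_bigr (fun j : 'I_ _ => if j == k :> nat then c j else 0)) => [|j _].
  rewrite -big_mkcond big_ord1_eq kN.
  have : x \in B k by rewrite inB.
  rewrite in_setE /B /= in_itv /= => /andP[ckx xck].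
  rewrite ler_norml; move: ckx xck; rewrite /c -addn1 natrD mulrDl mul1r; lra.
by rewrite indicE inB eq_sym; case: (_ == _); rewrite ?mulr1 ?mulr0.
Qed.

Lemma setwise_cvg_Rintegral {I : Type} {F : set_system I} {FF : Filter F}
    {mu : I -> probability T R} {nu : probability T R} {f : T -> R} {M : R} :
  (forall B, measurable B -> fine (mu i B) @[i --> F] --> fine (nu B)) ->
  measurable_fun setT f -> (forall x, `|f x| <= M) ->
  \int[mu i]_x f x @[i --> F] --> \int[nu]_x f x.
Proof.
move=> munu mf fM; apply/cvgrPdist_le => e e0.
have e3 : 0 < e / 3 by rewrite divr_gt0.
have [N [c [B [mB fs]]]] := uniform_simple_approx _ _ _ mf fM e3.
have sum_cvg : \sum_(k < N) c k * fine (mu i (B k)) @[i --> F] -->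
    \sum_(k < N) c k * fine (nu (B k)).
  apply: cvg_big => [|k _]; first exact: add_continuous.
  by apply: cvgM; [exact: cvg_cst | exact: munu].
move/cvgrPdist_le: sum_cvg => /(_ _ e3); apply: filterS => i sum_i.
have approx (Q : probability T R) :
    `|\int[Q]_x f x - \sum_(k < N) c k * fine (Q (B k))| <= e / 3.
  rewrite -Rintegral_indic_comb //; apply: Rintegral_dist_le fs.
    exact: bounded_integrable mf fM.
  exact: integrable_indic_comb.
have := approx nu; have := approx (mu i); move: sum_i.
set Inu := \int[nu]_x f x; set Imu := \int[mu i]_x f x.
set Snu := \sum_(k < N) c k * fine (nu (B k)).
set Smu := \sum_(k < N) c k * fine (mu i (B k)).
rewrite (distrC Imu) => dS dmu dnu.
have := ler_distD Snu Inu Imu; have := ler_distD Smu Snu Imu; lra.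
Qed.

End bounded_integrals.

Lemma continuous_borel_measurable {R : realType} {X : ptopologicalType}
    (f : X -> R) :
  continuous f -> measurable_fun [set: g_sigma_algebraType (@open X)] f.
Proof.
move=> cf; apply: (measurability _ (RGenOpens.measurableE R)).
move=> _ [_ [a [b ->]] <-]; apply: sub_sigma_algebra; rewrite setTI.
by apply: (proj1 (continuousP _) cf); exact: interval_open.
Qed.

Theorem lemma3 (R : realType) (d : nat) (alpha : R) (P : prob R d) :
  0 < alpha <= 1 ->
  compact (trimming alpha P : set (weak_prob R d)).
Proof.
move=> _; rewrite compact_ultra => U UU Utrim.
exists (ulim_probability U (fun Q : prob R d => Q) UU _ _ Utrim); split.
  exact: ulim_probability_dominated.
apply: initial_topology_cvg; apply: ptws_cvg => f.
have [cf [M fM]] := svalP f.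
exact: setwise_cvg_Rintegral (ulim_probability_cvg _ _ _ _ _ _)
  (continuous_borel_measurable _ cf) fM.
Qed.
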